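(* Let $\rho_{L_AA'B'L_B}$ be a state, with $L_A,L_B$ finite-dimensional of arbitrary size, let $\mathcal{N}_{A'B'\to AB}$ be a bipartite quantum channel, and let $\omega_{L_AABL_B}=\mathcal{N}_{A'B'\to AB}(\rho_{L_AA'B'L_B})$. Then $$E_\kappa(L_AA;BL_B)_\omega\le E_\kappa(L_AA';B'L_B)_\rho+E_\kappa(\mathcal{N}).$$
   Context: $T_X$ is partial transpose on $X$. For a bipartite state $\rho_{CD}$, $E_\kappa(C;D)_\rho=\log W_\kappa(C;D)_\rho$ with $W_\kappa(C;D)_\rho=\inf\{\operatorname{Tr}S_{CD}: S_{CD}\ge0,\ -T_D(S_{CD})\le T_D(\rho_{CD})\le T_D(S_{CD})\}$. For a bipartite channel $\mathcal{N}_{A'B'\to AB}$, its Choi operator is $J^{\mathcal{N}}_{L'_AABL'_B}=\mathcal{N}(|\Upsilon\rangle\langle\Upsilon|_{L'_AA'}\otimes|\Upsilon\rangle\langle\Upsilon|_{B'L'_B})$, $|\Upsilon\rangle_{XY}=\sum_i|i\rangle_X|i\rangle_Y$, $L'_A\simeq A'$, $L'_B\simeq B'$, and $E_\kappa(\mathcal{N})=\log\Gamma_\kappa(\mathcal{N})$ with $\Gamma_\kappa(\mathcal{N})=\inf\{\|\operatorname{Tr}_{AB}Q_{L'_AABL'_B}\|_\infty: Q\ge0,\ -T_{BL'_B}(Q)\le T_{BL'_B}(J^{\mathcal{N}})\le T_{BL'_B}(Q)\}$. *)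

From HB Require Import structures.
From mathcomp Require Import all_boot all_order all_algebra.
Set Implicit Arguments. Unset Strict Implicit. Unset Printing Implicit Defensive.
Import Order.TTheory GRing.Theory Num.Theory.
Local Open Scope ring_scope.

Section Defs.
Variable R : numClosedFieldType.

(* Operators on the Hilbert space C^T, T a finite index type, as matrices
   indexed by T. Composite systems X Y are indexed by pairs X * Y. *)
Definition op (T : finType) := T -> T -> R.

Definition trace (T : finType) (X : op T) : R := \sum_(i : T) X i i.

Definition psd (T : finType) (X : op T) : Prop :=
  forall v : T -> R, 0 <= \sum_(i : T) \sum_(j : T) Num.conj (v i) * X i j * v j.

Definition opsub (T : finType) (X Y : op T) : op T := fun i j => X i j - Y i j.
Definition opadd (T : finType) (X Y : op T) : op T := fun i j => X i j + Y i j.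
Definition opopp (T : finType) (X : op T) : op T := fun i j => - X i j.

Definition loew (T : finType) (X Y : op T) : Prop := psd (opsub Y X).

Definition state (T : finType) (X : op T) : Prop := psd X /\ trace X = 1.

Definition ptD (C D : finType) (M : op (C * D)%type) : op (C * D)%type :=
  fun x y => M (x.1, y.2) (y.1, x.2).

Definition Wfeas (C D : finType) (rho : op (C * D)%type) (w : R) : Prop :=
  exists S : op (C * D)%type, psd S /\ loew (opopp (ptD S)) (ptD rho)
    /\ loew (ptD rho) (ptD S) /\ trace S = w.

Definition is_inf (P : R -> Prop) (x : R) : Prop :=
  (forall y, P y -> x <= y) /\ (forall z, (forall y, P y -> z <= y) -> z <= x).

Definition W_kappa (C D : finType) (rho : op (C * D)%type) (w : R) : Prop :=
  is_inf (Wfeas rho) w.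

(* Bipartite maps N : L(A'B') -> L(AB).  The action of id_{L_A} (x) N (x) id_{L_B}
   on an operator on (L_A * A') * (B' * L_B), giving one on (L_A * A) * (B * L_B). *)
Definition ext (A' B' A B LA LB : finType) (N : op (A' * B')%type -> op (A * B)%type)
  (X : op ((LA * A') * (B' * LB))%type) : op ((LA * A) * (B * LB))%type :=
  fun x y =>
    N (fun u u' => X ((x.1.1, u.1), (u.2, x.2.2)) ((y.1.1, u'.1), (u'.2, y.2.2)))
      (x.1.2, x.2.1) (y.1.2, y.2.1).

Definition linear_map (S T : finType) (N : op S -> op T) : Prop :=
  (forall X Y, N (opadd X Y) = opadd (N X) (N Y)) /\
  (forall (c : R) X, N (fun i j => c * X i j) = fun i j => c * N X i j).

(* quantum channel (CPTP): linear, completely positive (id (x) N (x) id is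
   positive for all finite reference systems on either side), trace preserving *)
Definition channel (A' B' A B : finType) (N : op (A' * B')%type -> op (A * B)%type) : Prop :=
  linear_map N /\
  (forall (LA LB : finType) (X : op ((LA * A') * (B' * LB))%type), psd X -> psd (ext N X)) /\
  (forall X, trace (N X) = trace X).

(* |Upsilon><Upsilon|_{L'_A A'} (x) |Upsilon><Upsilon|_{B' L'_B}, on (L'_A * A') * (B' * L'_B) *)
Definition UpsUps (A' B' : finType) : op ((A' * A') * (B' * B'))%type :=
  fun x y => ((x.1.1 == x.1.2) && (y.1.1 == y.1.2) && (x.2.1 == x.2.2)
               && (y.2.1 == y.2.2))%:R.

Definition choi (A' B' A B : finType) (N : op (A' * B')%type -> op (A * B)%type)
  : op ((A' * A) * (B * B'))%type := ext N (@UpsUps A' B').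

Definition trAB (A' B' A B : finType) (Q : op ((A' * A) * (B * B'))%type) : op (A' * B')%type :=
  fun x y => \sum_(a : A) \sum_(b : B) Q ((x.1, a), (b, x.2)) ((y.1, a), (b, y.2)).

Definition sqnorm (T : finType) (v : T -> R) : R := \sum_(i : T) `|v i| ^+ 2.
Definition apply (T : finType) (X : op T) (v : T -> R) : T -> R :=
  fun i => \sum_(j : T) X i j * v j.

Definition opnorm_bound (T : finType) (X : op T) (g : R) : Prop :=
  0 <= g /\ forall v, sqnorm (apply X v) <= g ^+ 2 * sqnorm v.
Definition is_opnorm (T : finType) (X : op T) (g : R) : Prop :=
  opnorm_bound X g /\ forall g', opnorm_bound X g' -> g <= g'.

Definition Gfeas (A' B' A B : finType) (N : op (A' * B')%type -> op (A * B)%type) (g : R) : Prop :=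
  exists Q : op ((A' * A) * (B * B'))%type, psd Q /\
    loew (opopp (ptD Q)) (ptD (choi N)) /\ loew (ptD (choi N)) (ptD Q) /\
    is_opnorm (trAB Q) g.

Definition Gamma_kappa (A' B' A B : finType) (N : op (A' * B')%type -> op (A * B)%type) (g : R) : Prop :=
  is_inf (Gfeas N) g.

End Defs.

(* Write the channel output as a link product: omega = link rho J,
   a contraction of rho with the Choi operator J over A'B' (ext_link).  Given a
   feasible S for rho (-T S <= T rho <= T S) and a feasible Q for N
   (-T Q <= T J <= T Q), the operator link S Q is feasible for omega: link
   products of psd operators are psd (they are compressions of Schur products),
   so the sandwich inequalities multiply (link_sandwich), and partial
   transposition on B L_B commutes with the link product (link_ptD).  Its trace
   is bounded by Tr S * ||Tr_AB Q||_inf (trace_link_le), via the operator-norm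
   bound <z, M z> <= ||M|| ||z||^2 for psd M.  Passing to infima over S and Q
   (inf_mul_le), using Tr S >= Tr rho = 1 > 0, gives the theorem. *)

From HB Require Import structures.
From mathcomp Require Import all_boot all_order all_algebra.
From mathcomp Require Import ring.
From Stdlib Require Import FunctionalExtensionality.
Import Order.TTheory GRing.Theory Num.Theory.
Set Implicit Arguments. Unset Strict Implicit. Unset Printing Implicit Defensive.
Local Open Scope ring_scope.

Section Positivity.
Variable R : numClosedFieldType.

(* Conjugation rewrites stated with the ^* head symbol, so that later ring
   normalisations see a single form of the conjugate. *)
Lemma conjD (x y : R) : (x + y)^* = x^* + y^*. Proof. exact: rmorphD. Qed.
Lemma conjB (x y : R) : (x - y)^* = x^* - y^*. Proof. exact: rmorphB. Qed.
Lemma conjM (x y : R) : (x * y)^* = x^* * y^*. Proof. exact: rmorphM. Qed.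
Lemma conjN (x : R) : (- x)^* = - x^*. Proof. exact: rmorphN. Qed.
Lemma conjV (x : R) : (x^-1)^* = (x^*)^-1. Proof. exact: fmorphV. Qed.
Lemma conj_sum (I : Type) (r : seq I) (F : I -> R) :
  (\sum_(i <- r) F i)^* = \sum_(i <- r) (F i)^*.
Proof. exact: rmorph_sum. Qed.

Definition form (T : finType) (X : op R T) (u w : T -> R) : R :=
  \sum_i \sum_j (u i)^* * X i j * w j.

Definition basis (T : finType) (c : R) (i : T) : T -> R := fun k => c * (k == i)%:R.

Lemma sum_delta (T : finType) (i : T) (F : T -> R) : \sum_k (k == i)%:R * F k = F i.
Proof.
rewrite (bigD1 i) //= eqxx mul1r big1 ?addr0 // => k /negbTE ->; exact: mul0r.
Qed.

Lemma sum_deltar (T : finType) (i : T) (F : T -> R) : \sum_k F k * (k == i)%:R = F i.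
Proof. by rewrite -[RHS](sum_delta i); apply: eq_bigr => k _; rewrite mulrC. Qed.

Lemma sum_pair (I J : finType) (F : I * J -> R) : \sum_p F p = \sum_i \sum_j F (i, j).
Proof. by rewrite pair_bigA; apply: eq_bigr => -[i j] _. Qed.

Lemma sum_rotate3 (I J K : finType) (F : I -> J -> K -> R) :
  \sum_i \sum_j \sum_k F i j k = \sum_k \sum_i \sum_j F i j k.
Proof. by under eq_bigr => i _ do rewrite exchange_big; rewrite exchange_big. Qed.

Lemma form_addl (T : finType) (X : op R T) (u1 u2 w : T -> R) :
  form X (fun k => u1 k + u2 k) w = form X u1 w + form X u2 w.
Proof.
rewrite /form -big_split; apply: eq_bigr => i _; rewrite -big_split.
by apply: eq_bigr => j _; rewrite conjD !mulrDl.
Qed.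

Lemma form_addr (T : finType) (X : op R T) (u w1 w2 : T -> R) :
  form X u (fun k => w1 k + w2 k) = form X u w1 + form X u w2.
Proof.
rewrite /form -big_split; apply: eq_bigr => i _; rewrite -big_split.
by apply: eq_bigr => j _; rewrite mulrDr.
Qed.

Lemma form_basisl (T : finType) (X : op R T) (c : R) (i : T) (w : T -> R) :
  form X (basis c i) w = c^* * \sum_j X i j * w j.
Proof.
rewrite /form -(sum_delta i (fun k => c^* * \sum_j X k j * w j)).
apply: eq_bigr => k _; rewrite !mulr_sumr; apply: eq_bigr => j _.
by rewrite conjM conjC_nat; ring.
Qed.

Lemma form_basisr (T : finType) (X : op R T) (u : T -> R) (c : R) (j : T) :
  form X u (basis c j) = (\sum_i (u i)^* * X i j) * c.
Proof.
rewrite /form mulr_suml; apply: eq_bigr => i _.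
rewrite -(sum_deltar j (fun l => (u i)^* * X i l * c)).
by apply: eq_bigr => l _; rewrite /basis; ring.
Qed.

Lemma form_basis2 (T : finType) (X : op R T) (c d : R) (i j : T) :
  form X (basis c i) (basis d j) = c^* * X i j * d.
Proof.
rewrite form_basisl -mulrA -(sum_deltar j (fun l => X i l * d)).
by congr (_ * _); apply: eq_bigr => l _; rewrite /basis; ring.
Qed.

(* Restricting the form to the plane spanned by e_i, e_j (taking v = c e_i + e_j). *)
Lemma psd_pair (T : finType) (X : op R T) (i j : T) (c : R) : psd X ->
  0 <= c^* * c * X i i + c^* * X i j + X j i * c + X j j.
Proof.
move=> /(_ (fun k => basis c i k + basis 1 j k)).
rewrite -/(form X _ _) form_addl !form_addr !form_basis2 conjC1.
by congr (0 <= _); ring.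
Qed.

Lemma psd_diag (T : finType) (X : op R T) (i : T) : psd X -> 0 <= X i i.
Proof. by move=> /(_ (basis 1 i)); rewrite -/(form X _ _) form_basis2 conjC1 mul1r mulr1. Qed.

(* A psd matrix is Hermitian: the forms at c = 1 and c = i are real. *)
Lemma psd_herm (T : finType) (X : op R T) (i j : T) : psd X -> X j i = (X i j)^*.
Proof.
move=> hX; set a := X i j; set b := X j i.
have real_conj c : let q := c^* * c * X i i + c^* * a + b * c + X j j in q^* = q.
  by move=> q; apply: geC0_conj; apply: psd_pair.
have rii : (X i i)^* = X i i by apply: geC0_conj; apply: psd_diag.
have rjj : (X j j)^* = X j j by apply: geC0_conj; apply: psd_diag.
have e1 := real_conj 1; have e2 := real_conj 'i.
rewrite /= !conjD !conjM ?conjN ?conjCK ?conjC1 ?conjCi rii rjj in e1 e2.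
move/eqP: e1; rewrite -subr_eq0 => /eqP; set E1 := (X in X = 0) => e1.
move/eqP: e2; rewrite -subr_eq0 => /eqP; set E2 := (X in X = 0) => e2.
have : 'i * (2 * (a^* - b)) = E2 + 'i * E1 by rewrite /E1 /E2; ring.
rewrite e1 e2 mulr0 addr0 => /eqP.
by rewrite mulf_eq0 (negbTE (neq0Ci R)) mulf_eq0 pnatr_eq0 subr_eq0 => /eqP.
Qed.

Lemma psd_row0 (T : finType) (X : op R T) (i j : T) : psd X -> X i i = 0 -> X i j = 0.
Proof.
move=> hX Xii0; apply/eqP/negPn/negP => a0.
set a := X i j; set n := a * a^*.
have n0 : 0 < n by rewrite mul_conjC_gt0.
set k := (X j j + 1) / (2 * n).
have Xjj0 := psd_diag j hX.
have k0 : 0 <= k by rewrite divr_ge0 ?addr_ge0 // mulr_ge0 // ltW.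
have := psd_pair i j (- a * k) hX.
rewrite Xii0 mulr0 add0r (psd_herm i j hX) -/a conjM conjN (geC0_conj k0).
have -> : (- a^* * k) * a + a^* * (- a * k) + X j j = -1.
  by rewrite /k /n; field; rewrite conjC_eq0 andbb.
by rewrite ler0N1.
Qed.

Lemma psd_eliminate (T : finType) (X : op R T) (i0 : T) : psd X -> 0 < X i0 i0 ->
  psd (fun i j => X i j - X i i0 * X i0 j / X i0 i0).
Proof.
move=> hX d0 v; set d := X i0 i0.
set a := \sum_j X i0 j * v j.
have b_conj : \sum_i (v i)^* * X i i0 = a^*.
  rewrite conj_sum; apply: eq_bigr => i _; by rewrite conjM (psd_herm i0 i hX) mulrC.
have form_elim : form (fun i j => X i j - X i i0 * X i0 j / d) v v = form X v v - a^* * a / d.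
  rewrite /form -b_conj /a mulr_suml mulr_suml -sumrB; apply: eq_bigr => i _.
  rewrite mulr_sumr mulr_suml -sumrB; apply: eq_bigr => j _; ring.
have := hX (fun k => v k + basis (- a / d) i0 k).
rewrite -/(form X _ _) form_addl !form_addr form_basisr form_basisl form_basis2 -/a b_conj.
rewrite -[X in _ -> 0 <= X]/(form _ v v) form_elim conjM conjN conjV (geC0_conj (ltW d0)).
by rewrite -/d; congr (0 <= _); field; rewrite gt_eqF.
Qed.

(* Gram (Cholesky) decomposition: every psd matrix is a finite sum of rank-one
   matrices w w^*; by induction on the number of nonzero diagonal entries. *)
Lemma psd_gram (T : finType) (X : op R T) : psd X ->
  exists s : seq (T -> R), forall i j, X i j = \sum_(w <- s) w i * (w j)^*.
Proof.
move=> hX; have [n] := ubnP #|[pred i | X i i != 0]|.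
elim: n X hX => // n IH X hX supp_lt.
case: (pickP [pred i | X i i != 0]) => [i0 /= Xi0 | diag0]; last first.
  exists [::] => i j; rewrite big_nil; apply: (psd_row0 j hX).
  by apply/eqP/negbFE; exact: diag0.
have d0 : 0 < X i0 i0 by rewrite lt_def Xi0 psd_diag.
set X' := fun i j => X i j - X i i0 * X i0 j / X i0 i0.
have supp_sub : [pred i | X' i i != 0] \subset [predD1 [pred i | X i i != 0] & i0].
  apply/subsetP => i; rewrite !inE /X'.
  have [-> | _] := eqVneq i i0; first by rewrite mulfK ?subrr ?eqxx // gt_eqF.
  apply: contraNN => /eqP Xii0.
  by rewrite Xii0 (psd_row0 i0 hX Xii0) !mul0r subrr.
have [|s hs] := IH X' (psd_eliminate hX d0).
  apply: leq_ltn_trans (subset_leq_card supp_sub) _.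
  by move: supp_lt; rewrite (cardD1 i0 [pred i | X i i != 0]) inE /= Xi0.
set r := sqrtC (X i0 i0).
have r0 : 0 < r by rewrite sqrtC_gt0.
exists ((fun i => X i i0 / r) :: s) => i j.
rewrite big_cons -hs /X' conjM conjV (geC0_conj (ltW r0)) -(psd_herm j i0 hX).
have -> : X i0 i0 = r * r by rewrite -expr2 sqrtCK.
by field; rewrite gt_eqF.
Qed.

Lemma gram_psd (T : finType) (s : seq (T -> R)) (X : op R T) :
  (forall i j, X i j = \sum_(w <- s) w i * (w j)^*) -> psd X.
Proof.
move=> hX v.
under eq_bigr => i _ do under eq_bigr => j _ do rewrite hX mulr_sumr mulr_suml.
under eq_bigr => i _ do rewrite exchange_big.
rewrite exchange_big; apply: sumr_ge0 => w _.
rewrite (_ : \sum_i _ = (\sum_i (v i)^* * w i) * (\sum_i (v i)^* * w i)^*) ?mul_conjC_ge0 //.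
rewrite conj_sum mulr_suml; apply: eq_bigr => i _; rewrite mulr_sumr; apply: eq_bigr => j _.
by rewrite conjM conjCK; ring.
Qed.

Lemma psd_eq (T : finType) (X Y : op R T) : (forall i j, X i j = Y i j) -> psd X -> psd Y.
Proof. by move=> eXY hX v; under eq_bigr => i _ do under eq_bigr => j _ do rewrite -eXY. Qed.

Lemma psd_add (T : finType) (X Y : op R T) : psd X -> psd Y -> psd (fun i j => X i j + Y i j).
Proof.
move=> hX hY v; rewrite (_ : \sum_i _ = form X v v + form Y v v).
  exact: addr_ge0 (hX v) (hY v).
rewrite /form -big_split; apply: eq_bigr => i _; rewrite -big_split.
by apply: eq_bigr => j _ /=; ring.
Qed.

Lemma psd_scale (T : finType) (c : R) (X : op R T) : 0 <= c -> psd X ->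
  psd (fun i j => c * X i j).
Proof.
move=> c0 hX v; rewrite (_ : \sum_i _ = c * form X v v) ?mulr_ge0 //; first exact: hX.
rewrite /form mulr_sumr; apply: eq_bigr => i _; rewrite mulr_sumr.
by apply: eq_bigr => j _; ring.
Qed.

Lemma psd_sum (I T : finType) (X : I -> op R T) : (forall k, psd (X k)) ->
  psd (fun i j => \sum_k X k i j).
Proof.
move=> hX v; rewrite (_ : \sum_i _ = \sum_k form (X k) v v).
  by apply: sumr_ge0 => k _; exact: hX.
rewrite /form -sum_rotate3; apply: eq_bigr => i _; apply: eq_bigr => j _.
by rewrite mulr_sumr mulr_suml.
Qed.

Lemma psd_pull (S T : finType) (f : S -> T) (X : op R T) : psd X ->
  psd (fun s t => X (f s) (f t)).
Proof.
move=> /psd_gram [s hs]; apply: (@gram_psd _ (map (fun w => w \o f) s)) => i j.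
by rewrite big_map hs.
Qed.

Lemma psd_schur (T : finType) (X Y : op R T) : psd X -> psd Y ->
  psd (fun i j => X i j * Y i j).
Proof.
move=> /psd_gram [s1 h1] /psd_gram [s2 h2].
apply: (@gram_psd _ [seq (fun i => w i * u i) | w <- s1, u <- s2]) => i j.
rewrite big_allpairs_dep h1 h2 mulr_suml; apply: eq_bigr => w _.
by rewrite mulr_sumr; apply: eq_bigr => u _; rewrite conjM; ring.
Qed.

(* Summing all blocks of a psd matrix on Y * U (X |-> W^* X W, with W the
   all-ones map from U) gives a psd matrix on Y. *)
Lemma psd_sum_blocks (Y U : finType) (X : op R (Y * U)%type) : psd X ->
  psd (fun x y => \sum_u \sum_u' X (x, u) (y, u')).
Proof.
move=> hX v.
rewrite (_ : \sum_x _ = form X (fun p => v p.1) (fun p => v p.1)); first exact: hX.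
transitivity (\sum_x \sum_y \sum_u \sum_u' (v x)^* * X (x, u) (y, u') * v y).
  apply: eq_bigr => x _; apply: eq_bigr => y _; rewrite mulr_sumr mulr_suml.
  by apply: eq_bigr => u _; rewrite mulr_sumr mulr_suml.
rewrite /form sum_pair; apply: eq_bigr => x _; rewrite exchange_big.
by apply: eq_bigr => u _; rewrite sum_pair.
Qed.

Lemma sqnorm_ge0 (T : finType) (z : T -> R) : 0 <= sqnorm z.
Proof. by apply: sumr_ge0 => i _; rewrite exprn_ge0. Qed.

Lemma sqnorm_eq0 (T : finType) (z : T -> R) : sqnorm z = 0 -> forall i, z i = 0.
Proof.
move=> /psumr_eq0P z0 i; have /eqP := z0 (fun i _ => exprn_ge0 2 (normr_ge0 (z i))) i isT.
by rewrite sqrf_eq0 normr_eq0 => /eqP.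
Qed.

Lemma form_apply (T : finType) (M : op R T) (z : T -> R) :
  form M z z = \sum_i (z i)^* * apply M z i.
Proof. by apply: eq_bigr => i _; rewrite /apply mulr_sumr; apply: eq_bigr => j _; ring. Qed.

(* For psd M with ||M z|| <= g ||z||: <z, M z> <= g ||z||^2.  With x = <z, M z>
   and n = ||z||^2, expanding 0 <= ||M z - (x/n) z||^2 gives x^2 <= n ||M z||^2. *)
Lemma form_le_opnorm (T : finType) (M : op R T) (g : R) (z : T -> R) :
  psd M -> opnorm_bound M g -> form M z z <= g * sqnorm z.
Proof.
move=> hM [g0 hg].
set x := form M z z; set n := sqnorm z; set m := sqnorm (apply M z).
have x0 : 0 <= x by exact: hM.
have n0 := sqnorm_ge0 z.
have [n_eq0 | n_neq0] := eqVneq n 0.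
  have z0 := sqnorm_eq0 n_eq0.
  rewrite n_eq0 mulr0 /x form_apply big1 // => i _; by rewrite z0 conjC0 mul0r.
have n_gt0 : 0 < n by rewrite lt_def n_neq0 n0.
set c := x / n.
have c_real : c^* = c by rewrite /c conjM conjV !geC0_conj.
have residual : sqnorm (fun i => apply M z i - c * z i) = m - x ^+ 2 / n.
  rewrite /sqnorm /m /n /sqnorm.
  under eq_bigr => i _ do rewrite normCK conjB conjM c_real.
  have -> : \sum_i (apply M z i - c * z i) * ((apply M z i)^* - c * (z i)^*) =
     \sum_i `|apply M z i| ^+ 2 - c * (\sum_i (z i)^* * apply M z i)
       - c * (\sum_i (z i)^* * apply M z i)^* + c * c * \sum_i `|z i| ^+ 2.
    rewrite conj_sum !mulr_sumr -!sumrB -big_split /=; apply: eq_bigr => i _.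
    by rewrite !normCK conjM conjCK; ring.
  rewrite -form_apply -/x geC0_conj // /c -/(sqnorm z) -/n.
  by field.
have : 0 <= m - x ^+ 2 / n by rewrite -residual sqnorm_ge0.
rewrite subr_ge0 ler_pdivrMr // => x2_le.
have : x ^+ 2 <= (g * n) ^+ 2.
  apply: le_trans x2_le _; rewrite (_ : (g * n) ^+ 2 = (g ^+ 2 * n) * n); last by ring.
  exact: ler_wpM2r (hg z).
by rewrite ler_sqr ?nnegrE ?mulr_ge0.
Qed.

(* Hilbert-Schmidt pairing bound: sum_{u,u'} P u u' * M u u' = Tr(P^T M) is at
   most ||M|| Tr P for psd P, M; decompose P = sum w w^* and use the bound above
   on each conj(w). *)
Lemma pairing_le (T : finType) (P M : op R T) (g : R) :
  psd P -> psd M -> opnorm_bound M g -> \sum_u \sum_u' P u u' * M u u' <= g * trace P.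
Proof.
move=> /psd_gram [s hs] hM hg; pose cw (w : T -> R) u := (w u)^*.
have -> : \sum_u \sum_u' P u u' * M u u' = \sum_(w <- s) form M (cw w) (cw w).
  transitivity (\sum_u \sum_u' \sum_(w <- s) w u * M u u' * (w u')^*).
    apply: eq_bigr => u _; apply: eq_bigr => u' _; rewrite hs mulr_suml.
    by apply: eq_bigr => w _; ring.
  under eq_bigr => u _ do rewrite exchange_big.
  rewrite exchange_big; apply: eq_bigr => w _; apply: eq_bigr => u _.
  by apply: eq_bigr => u' _; rewrite /cw conjCK.
have -> : trace P = \sum_(w <- s) sqnorm (cw w).
  rewrite /trace (eq_bigr _ (fun u _ => hs u u)) exchange_big.
  apply: eq_bigr => w _; apply: eq_bigr => u _.
  by rewrite /cw norm_conjC normCK.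
rewrite mulr_sumr; apply: ler_sum => w _; exact: form_le_opnorm.
Qed.

End Positivity.

Lemma linear_map_sum (R : numClosedFieldType) (S T : finType) (N : op R S -> op R T)
    (I : Type) (r : seq I) (c : I -> R) (E : I -> op R S) :
  linear_map N ->
  N (fun i j => \sum_(k <- r) c k * E k i j) = fun p q => \sum_(k <- r) c k * N (E k) p q.
Proof.
move=> [N_add N_scale]; elim: r => [|k r IH].
  have -> : (fun i j => \sum_(k <- [::]) c k * E k i j) = (fun i j => 0 * (0 : R)).
    by apply: functional_extensionality => i; apply: functional_extensionality => j;
       rewrite big_nil mul0r.
  rewrite N_scale; apply: functional_extensionality => p; apply: functional_extensionality => q.
  by rewrite big_nil mul0r.
have -> : (fun i j => \sum_(l <- k :: r) c l * E l i j) =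
    opadd (fun i j => c k * E k i j) (fun i j => \sum_(l <- r) c l * E l i j).
  by apply: functional_extensionality => i; apply: functional_extensionality => j;
     rewrite big_cons.
rewrite N_add N_scale IH; apply: functional_extensionality => p.
by apply: functional_extensionality => q; rewrite big_cons.
Qed.

Section LinkProduct.
Variable R : numClosedFieldType.
Variables LA A' B' LB A B : finType.
Local Notation In := ((LA * A') * (B' * LB))%type.
Local Notation Choi := ((A' * A) * (B * B'))%type.
Local Notation Out := ((LA * A) * (B * LB))%type.
Local Notation U := (A' * B')%type.

Definition in_pos (x : Out) (u : U) : In := ((x.1.1, u.1), (u.2, x.2.2)).
Definition choi_pos (x : Out) (u : U) : Choi := ((u.1, x.1.2), (x.2.1, u.2)).

(* The link product of P on L_A A' B' L_B with K on L'_A A B L'_B, contracting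
   A'B' against L'_A L'_B; applying id (x) N (x) id to rho is link rho (choi N). *)
Definition link (P : op R In) (K : op R Choi) : op R Out :=
  fun x y => \sum_u \sum_u' P (in_pos x u) (in_pos y u') * K (choi_pos x u) (choi_pos y u').

(* It is a compression of the Schur product of two pulled-back psd matrices. *)
Lemma link_psd (P : op R In) (K : op R Choi) : psd P -> psd K -> psd (link P K).
Proof.
move=> hP hK.
exact: (psd_sum_blocks (psd_schur (psd_pull (fun p : Out * U => in_pos p.1 p.2) hP)
                                  (psd_pull (fun p : Out * U => choi_pos p.1 p.2) hK))).
Qed.

Definition swap_tails (p : U * U) : U * U := ((p.1.1, p.2.2), (p.2.1, p.1.2)).

Lemma swap_tails_inj : injective swap_tails.
Proof. by apply: (can_inj (g := swap_tails)) => -[[a b] [c d]]. Qed.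

Lemma link_ptD (P : op R In) (K : op R Choi) : ptD (link P K) = link (ptD P) (ptD K).
Proof.
apply: functional_extensionality => x; apply: functional_extensionality => y.
rewrite /ptD /link !pair_bigA (reindex_inj swap_tails_inj).
by apply: eq_bigr => -[[a b] [c d]] _; case: x y => [[? ?] [? ?]] [[? ?] [? ?]].
Qed.

(* If -Q <= P <= Q and -K <= J <= K then -link Q K <= link P J <= link Q K:
   the two bounds are the half-sums of link (Q +- P) (K +- J). *)
Lemma link_sandwich (P Q : op R In) (J K : op R Choi) :
  loew (opopp Q) P -> loew P Q -> loew (opopp K) J -> loew J K ->
  loew (opopp (link Q K)) (link P J) /\ loew (link P J) (link Q K).
Proof.
rewrite /loew /opsub /opopp => hQP hPQ hKJ hJK.
have half_ge0 : (0 : R) <= 2^-1 by rewrite invr_ge0 ler0n.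
have link_pm P1 K1 P2 K2 :
    psd P1 -> psd K1 -> psd P2 -> psd K2 ->
    psd (fun i j => 2^-1 * (link P1 K1 i j + link P2 K2 i j)).
  move=> h1 h2 h3 h4; exact: psd_scale half_ge0 (psd_add (link_psd h1 h2) (link_psd h3 h4)).
split.
- apply: psd_eq (link_pm _ _ _ _ hQP hKJ hPQ hJK) => i j.
  rewrite opprK /link -!big_split mulr_sumr; apply: eq_bigr => u _.
  by rewrite -!big_split mulr_sumr; apply: eq_bigr => u' _ /=; field.
- apply: psd_eq (link_pm _ _ _ _ hQP hJK hPQ hKJ) => i j.
  rewrite /link -!big_split -sumrB mulr_sumr; apply: eq_bigr => u _.
  by rewrite -!big_split -sumrB mulr_sumr; apply: eq_bigr => u' _ /=; field.
Qed.

Definition in_block (l1 : LA) (l2 : LB) (u : U) : In := ((l1, u.1), (u.2, l2)).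

Definition block (P : op R In) (l1 : LA) (l2 : LB) : op R U :=
  fun u u' => P (in_block l1 l2 u) (in_block l1 l2 u').

Lemma trace_blocks (P : op R In) :
  trace P = \sum_l1 \sum_l2 trace (block P l1 l2).
Proof.
rewrite /trace sum_pair sum_pair; apply: eq_bigr => l1 _.
under eq_bigr => a _ do rewrite sum_pair.
by rewrite sum_rotate3; apply: eq_bigr => l2 _; rewrite sum_pair.
Qed.

Lemma trace_link (P : op R In) (K : op R Choi) : trace (link P K) =
  \sum_l1 \sum_l2 \sum_u \sum_u' block P l1 l2 u u' * trAB K u u'.
Proof.
rewrite /trace sum_pair sum_pair; apply: eq_bigr => l1 _.
under eq_bigr => a _ do rewrite sum_pair.
rewrite sum_rotate3; apply: eq_bigr => l2 _.
rewrite sum_rotate3; apply: eq_bigr => u _.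
rewrite sum_rotate3; apply: eq_bigr => u' _.
by rewrite /trAB mulr_sumr; apply: eq_bigr => a _; rewrite mulr_sumr.
Qed.

Lemma psd_trAB (K : op R Choi) : psd K -> psd (trAB K).
Proof.
move=> hK; apply: psd_sum => a; apply: psd_sum => b.
exact: (psd_pull (fun u : U => ((u.1, a), (b, u.2))) hK).
Qed.

Lemma trace_link_le (P : op R In) (K : op R Choi) (g : R) :
  psd P -> psd K -> opnorm_bound (trAB K) g -> trace (link P K) <= g * trace P.
Proof.
move=> hP hK hg; rewrite trace_link trace_blocks mulr_sumr; apply: ler_sum => l1 _.
rewrite mulr_sumr; apply: ler_sum => l2 _.
exact: pairing_le (psd_pull (in_block l1 l2) hP) (psd_trAB hK) hg.
Qed.

Definition matrix_unit (p : U * U) : op R U := fun v v' => ((v == p.1) && (v' == p.2))%:R.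

(* Expanding the input in matrix units and using linearity: the output of
   id (x) N (x) id is the link product of the input with the Choi operator. *)
Lemma ext_link (N : op R U -> op R (A * B)%type) (rho : op R In) :
  linear_map N -> ext N rho = link rho (choi N).
Proof.
move=> hN; apply: functional_extensionality => x; apply: functional_extensionality => y.
have expand : (fun v v' => rho ((x.1.1, v.1), (v.2, x.2.2)) ((y.1.1, v'.1), (v'.2, y.2.2)))
    = (fun v v' => \sum_(p : U * U) rho (in_pos x p.1) (in_pos y p.2) * matrix_unit p v v').
  apply: functional_extensionality => v; apply: functional_extensionality => v'.
  rewrite sum_pair; symmetry.
  transitivity (\sum_u (u == v)%:R * \sum_u' (u' == v')%:R * rho (in_pos x u) (in_pos y u')).
    apply: eq_bigr => u _; rewrite mulr_sumr; apply: eq_bigr => u' _.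
    rewrite /matrix_unit /= [v == u]eq_sym [v' == u']eq_sym.
    by case: (u == v); case: (u' == v'); rewrite /= ?mul1r ?mul0r ?mulr1 ?mulr0.
  by rewrite sum_delta sum_delta.
rewrite /ext expand linear_map_sum // sum_pair /link; apply: eq_bigr => u _.
apply: eq_bigr => u' _; congr (_ * _); rewrite /choi /ext /=; congr N.
apply: functional_extensionality => v; apply: functional_extensionality => v'.
case: u u' v v' => [u1 u2] [u1' u2'] [v1 v2] [v1' v2'].
rewrite /matrix_unit /UpsUps /= !xpair_eqE [u1 == v1]eq_sym [u1' == v1']eq_sym.
by case: (v1 == u1); case: (v2 == u2); case: (v1' == u1'); case: (v2' == u2').
Qed.

End LinkProduct.

Section Feasibility.
Variable R : numClosedFieldType.

Lemma trace_psd_ge0 (T : finType) (X : op R T) : psd X -> 0 <= trace X.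
Proof. by move=> hX; apply: sumr_ge0 => i _; exact: psd_diag. Qed.

Lemma trace_ptD (C D : finType) (M : op R (C * D)%type) : trace (ptD M) = trace M.
Proof. by apply: eq_bigr => -[c d] _. Qed.

(* Every feasible value of W_kappa(C;D)_rho dominates Tr rho, since
   T_D S - T_D rho >= 0 and partial transposition preserves the trace. *)
Lemma Wfeas_trace_le (C D : finType) (rho : op R (C * D)%type) (s : R) :
  Wfeas rho s -> trace rho <= s.
Proof.
move=> [S [_ [_ [/trace_psd_ge0 + <-]]]].
by rewrite /trace /opsub sumrB -!/(trace _) !trace_ptD subr_ge0.
Qed.

Lemma Wfeas_ext (LA A' B' LB A B : finType)
    (rho : op R ((LA * A') * (B' * LB))%type) (N : op R (A' * B')%type -> op R (A * B)%type)
    (s g : R) :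
  linear_map N -> Wfeas rho s -> Gfeas N g ->
  exists2 w, Wfeas (ext N rho) w & w <= s * g.
Proof.
move=> hN [S [hS [hSl [hSu trS]]]] [Q [hQ [hQl [hQu [hg _]]]]].
exists (trace (link S Q)); last by rewrite -trS mulrC; exact: trace_link_le.
exists (link S Q); rewrite ext_link // !link_ptD.
by have [lo up] := link_sandwich hSl hSu hQl hQu; split; first exact: link_psd.
Qed.

Lemma inf_mul_le (P G : R -> Prop) (wp wg w : R) :
  is_inf P wp -> is_inf G wg -> (forall s, P s -> 0 < s) -> (forall g, G g -> 0 <= g) ->
  (forall s g, P s -> G g -> w <= s * g) -> w <= wp * wg.
Proof.
move=> [_ wp_glb] [_ wg_glb] P_gt0 G_ge0 hw.
have w_le s : P s -> w <= s * wg.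
  move=> Ps; have s_gt0 := P_gt0 s Ps.
  rewrite -ler_pdivrMl //; apply: wg_glb => g Gg.
  by rewrite ler_pdivrMl //; exact: hw.
have : 0 <= wg by exact: wg_glb.
rewrite le0r => /predU1P [wg0 | wg_gt0]; last first.
  rewrite -ler_pdivrMr //; apply: wp_glb => s Ps.
  by rewrite ler_pdivrMr //; exact: w_le.
(* inf G = 0: P is nonempty (an empty set has no infimum), and each s in P gives w <= 0. *)
rewrite wg0 mulr0; apply/negPn/negP => w_gt0.
have : wp + 1 <= wp.
  by apply: wp_glb => s /w_le; rewrite wg0 mulr0 (negbTE w_gt0).
by rewrite gerDl ler10.
Qed.

End Feasibility.

Theorem mainTheorem11 (R : numClosedFieldType) (LA A' B' LB A B : finType)
  (rho : op R ((LA * A') * (B' * LB))%type) (N : op R (A' * B')%type -> op R (A * B)%type)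
  (hrho : state rho) (hN : channel N)
  (w_omega w_rho g : R) :
  W_kappa (ext N rho) w_omega -> W_kappa rho w_rho -> Gamma_kappa N g ->
  w_omega <= w_rho * g.
Proof.
move=> [omega_lb _] inf_rho inf_gamma.
have [_ tr_rho] := hrho; have [lin_N _] := hN.
apply: (inf_mul_le inf_rho inf_gamma).
- by move=> s /Wfeas_trace_le; rewrite tr_rho; apply: lt_le_trans; exact: ltr01.
- by move=> g' [Q [_ [_ [_ [[g'_ge0 _] _]]]]].
- move=> s g' Ws Gg'; have [w Ww w_le] := Wfeas_ext lin_N Ws Gg'.
  exact: le_trans (omega_lb w Ww) w_le.
Qed.
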